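(* Let $\mathcal{X}_1,\mathcal{X}_2$ be non-empty sets, $\mathcal{B}_i\subseteq\mathcal{P}(\mathcal{X}_i)\setminus\{\emptyset\}$ and $\mathcal{D}_i$ a coherent set of desirable gambles on $\mathcal{X}_i$ for $i\in\{1,2\}$. Then $\mathcal{D}_1\otimes\mathcal{D}_2$ is a coherent set of desirable gambles on $\mathcal{X}_1\times\mathcal{X}_2$.
   Context: Gambles on a non-empty set $\mathcal{X}$ are bounded real functions; $\mathcal{G}(\mathcal{X})$ is the set of gambles, $\mathcal{G}_{>0}(\mathcal{X})$ the non-negative non-zero gambles, $\mathbb{I}_A$ the indicator of $A$. For $\mathcal{A}\subseteq\mathcal{G}(\mathcal{X})$: $\mathrm{posi}(\mathcal{A}):=\{\sum_{i=1}^n\lambda_if_i\colon n\in\mathbb{N},\lambda_i>0,f_i\in\mathcal{A}\}$, $\mathcal{E}(\mathcal{A}):=\mathrm{posi}(\mathcal{A}\cup\mathcal{G}_{>0}(\mathcal{X}))$. A coherent set of desirable gambles $\mathcal{D}\subseteq\mathcal{G}(\mathcal{X})$ satisfies, for all $f,g\in\mathcal{G}(\mathcal{X})$ and $\lambda>0$: (D1) $f\geq0,f\neq0\Rightarrow f\in\mathcal{D}$; (D2) $f\in\mathcal{D}\Rightarrow\lambda f\in\mathcal{D}$; (D3) $f,g\in\mathcal{D}\Rightarrow f+g\in\mathcal{D}$; (D4) $f\leq0\Rightarrow f\notin\mathcal{D}$. Gambles on $\mathcal{X}_i$ are identified with their cylindrical extensions to $\mathcal{X}_1\times\mathcal{X}_2$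 (e.g. $f(X_1)(x_1,x_2)=f(x_1)$), events $B\subseteq\mathcal{X}_1$ with $B\times\mathcal{X}_2$ (similarly for $\mathcal{X}_2$). $\mathcal{D}_1\otimes\mathcal{D}_2:=\mathcal{E}(\mathcal{A}_{1\to2}\cup\mathcal{A}_{2\to1})$ (with $\mathcal{E}$ taken on $\mathcal{X}_1\times\mathcal{X}_2$), where $\mathcal{A}_{1\to2}:=\{f_2(X_2)\mathbb{I}_{B_1}(X_1)\colon f_2\in\mathcal{D}_2,B_1\in\mathcal{B}_1\cup\{\mathcal{X}_1\}\}$ and $\mathcal{A}_{2\to1}:=\{f_1(X_1)\mathbb{I}_{B_2}(X_2)\colon f_1\in\mathcal{D}_1,B_2\in\mathcal{B}_2\cup\{\mathcal{X}_2\}\}$. *)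

From Stdlib Require Import Reals List ClassicalDescription.
Open Scope R_scope.

(* A gamble on X is a bounded real function. *)
Definition bounded {X : Type} (f : X -> R) : Prop :=
  exists M : R, forall x, Rabs (f x) <= M.

Definition gset (X : Type) := (X -> R) -> Prop.

Definition Gpos {X : Type} : gset X := fun f =>
  bounded f /\ (forall x, 0 <= f x) /\ (exists x, f x <> 0).

Definition posi {X : Type} (A : gset X) : gset X := fun f =>
  exists l : list (R * (X -> R)),
    l <> nil /\
    Forall (fun p => 0 < fst p /\ A (snd p)) l /\
    forall x, f x = fold_right (fun p acc => fst p * snd p x + acc) 0 l.

Definition natext {X : Type} (A : gset X) : gset X :=
  posi (fun f => A f \/ Gpos f).

(* Coherent set of desirable gambles: D ⊆ G(X) and (D1)-(D4). *)
Definition coherent {X : Type} (D : gset X) : Prop :=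
  (forall f, D f -> bounded f) /\
  (forall f, bounded f -> (forall x, 0 <= f x) -> (exists x, f x <> 0) -> D f) /\
  (forall f (lam : R), bounded f -> 0 < lam -> D f -> D (fun x => lam * f x)) /\
  (forall f g, bounded f -> bounded g -> D f -> D g -> D (fun x => f x + g x)) /\
  (forall f, bounded f -> (forall x, f x <= 0) -> ~ D f).

Definition indic {X : Type} (B : X -> Prop) (x : X) : R :=
  if excluded_middle_informative (B x) then 1 else 0.

Definition A12 {X1 X2 : Type} (BB1 : (X1 -> Prop) -> Prop) (D2 : gset X2)
  : gset (X1 * X2) := fun g =>
  exists f2 B1, D2 f2 /\ (BB1 B1 \/ B1 = (fun _ => True)) /\
    g = (fun z => f2 (snd z) * indic B1 (fst z)).

Definition A21 {X1 X2 : Type} (BB2 : (X2 -> Prop) -> Prop) (D1 : gset X1)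
  : gset (X1 * X2) := fun g =>
  exists f1 B2, D1 f1 /\ (BB2 B2 \/ B2 = (fun _ => True)) /\
    g = (fun z => f1 (fst z) * indic B2 (snd z)).

Definition indep_prod {X1 X2 : Type}
  (BB1 : (X1 -> Prop) -> Prop) (BB2 : (X2 -> Prop) -> Prop)
  (D1 : gset X1) (D2 : gset X2) : gset (X1 * X2) :=
  natext (fun g => A12 BB1 D2 g \/ A21 BB2 D1 g).

From Pilot Require Import Defs.
From Stdlib Require Import Reals List ClassicalDescription.
From Stdlib Require Import Lra Lia Classical FunctionalExtensionality RList.
From Stdlib Require ClassicalEpsilon.
Open Scope R_scope.

(* The closure properties (D1)-(D3) hold for every natural extension, so everything rests on
   (D4).  A non-positive element of [D1 ⊗ D2] gives, after dropping its non-negative part,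
   gambles [f_s] in [D2] gated by events [B_s] on [X1] and [g_t] in [D1] gated by events [C_t]
   on [X2] with  Σ_s I_{B_s}(a) f_s(b) + Σ_t I_{C_t}(b) g_t(a) <= 0  for all [a], [b].
   The finitely many events cut [X1] and [X2] into finitely many atoms.  For active atoms [α]
   of [X1] and [β] of [X2] pick [W α β] between the first sum over [b ∈ β] and minus the
   second sum over [a ∈ α].  Coherence of [D2] says that every positive combination of rows
   of [W] has a positive entry; coherence of [D1] says that every non-negative non-zero
   combination of columns has a negative entry.  Ville's theorem of the alternative, proved
   by Fourier-Motzkin elimination, forbids both at once. *)

Definition wsum {I : Type} (l : list I) (w v : I -> R) : R :=
  fold_right (fun i acc => w i * v i + acc) 0 l.

Section WeightedSums.
Context {I : Type}.
Implicit Types (l : list I) (w v : I -> R).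

Lemma wsum_app l1 l2 w v : wsum (l1 ++ l2) w v = wsum l1 w v + wsum l2 w v.
Proof. induction l1 as [|i l1 IH]; simpl; [ring|]. unfold wsum in *; simpl; rewrite IH; ring. Qed.

Lemma wsum_map {J : Type} (f : J -> I) (l : list J) w v :
  wsum (map f l) w v = wsum l (fun j => w (f j)) (fun j => v (f j)).
Proof.
  induction l as [|j l IH]; simpl; [reflexivity|].
  unfold wsum in *; simpl; rewrite IH; reflexivity.
Qed.

Lemma wsum_ext l w w' v v' :
  (forall i, In i l -> w i = w' i /\ v i = v' i) -> wsum l w v = wsum l w' v'.
Proof.
  induction l as [|i l IH]; intros H; simpl; [reflexivity|].
  destruct (H i (or_introl eq_refl)) as [-> ->].
  unfold wsum in *; simpl; rewrite IH; [reflexivity|]. intros; apply H; right; assumption.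
Qed.

Lemma wsum_le l w v v' :
  (forall i, In i l -> 0 <= w i /\ v i <= v' i) -> wsum l w v <= wsum l w v'.
Proof.
  induction l as [|i l IH]; intros H; simpl; [lra|].
  destruct (H i (or_introl eq_refl)) as [Hw Hv].
  assert (wsum l w v <= wsum l w v') by (apply IH; intros; apply H; right; assumption).
  unfold wsum in *; simpl. nra.
Qed.

Lemma wsum_const0 l w : wsum l w (fun _ => 0) = 0.
Proof.
  induction l as [|i l IH]; simpl; [reflexivity|].
  unfold wsum in *; simpl; rewrite IH; ring.
Qed.

Lemma wsum_weights0 l v : wsum l (fun _ => 0) v = 0.
Proof.
  induction l as [|i l IH]; simpl; [reflexivity|].
  unfold wsum in *; simpl; rewrite IH; ring.
Qed.

Lemma wsum_linear l w a b v v' :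
  wsum l w (fun i => a * v i + b * v' i) = a * wsum l w v + b * wsum l w v'.
Proof. induction l as [|i l IH]; simpl; [ring|]. unfold wsum in *; simpl; rewrite IH; ring. Qed.

Lemma wsum_opp l w v : wsum l w (fun i => - v i) = - wsum l w v.
Proof. induction l as [|i l IH]; simpl; [ring|]. unfold wsum in *; simpl; rewrite IH; ring. Qed.

Lemma wsum_scalel l w v a : wsum l (fun i => a * w i) v = a * wsum l w v.
Proof. induction l as [|i l IH]; simpl; [ring|]. unfold wsum in *; simpl; rewrite IH; ring. Qed.

Lemma wsum_bounded {X : Type} l w (F : I -> X -> R) :
  (forall i, In i l -> Defs.bounded (F i)) -> Defs.bounded (fun x => wsum l w (fun i => F i x)).
Proof.
  induction l as [|i l IH]; intros H.
  - exists 0; intros x; simpl; rewrite Rabs_R0; lra.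
  - destruct (H i (or_introl eq_refl)) as [M HM].
    destruct IH as [M' HM']; [intros; apply H; right; assumption|].
    exists (Rabs (w i) * M + M'); intros x; simpl.
    eapply Rle_trans; [apply Rabs_triang|]; rewrite Rabs_mult.
    apply Rplus_le_compat; [apply Rmult_le_compat_l; [apply Rabs_pos|apply HM] | apply HM'].
Qed.

End WeightedSums.

Section CoherentCone.
Context {X : Type} (D : gset X) (HD : coherent D).

Lemma coherent_bounded f : D f -> Defs.bounded f.
Proof. apply HD. Qed.

Lemma coherent_scale f a : 0 < a -> D f -> D (fun x => a * f x).
Proof. intros Ha Hf; apply HD; auto using coherent_bounded. Qed.

Lemma coherent_add f g : D f -> D g -> D (fun x => f x + g x).
Proof. intros Hf Hg; apply HD; auto using coherent_bounded. Qed.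

Lemma coherent_pos_point f : D f -> exists x, 0 < f x.
Proof.
  intros Hf; apply NNPP; intros Hno.
  apply (proj2 (proj2 (proj2 (proj2 HD))) f); auto using coherent_bounded.
  intros x; apply Rnot_lt_le; intros Hx; apply Hno; exists x; exact Hx.
Qed.

Lemma coherent_wsum {I : Type} (l : list I) (w : I -> R) (F : I -> X -> R) :
  (forall i, In i l -> 0 <= w i /\ D (F i)) -> (exists i, In i l /\ 0 < w i) ->
  D (fun x => wsum l w (fun i => F i x)).
Proof.
  induction l as [|i l IH]; intros Hl [i0 [Hi0 Hw0]]; [destruct Hi0|].
  destruct (Hl i (or_introl eq_refl)) as [Hwi HFi].
  assert (Hl' : forall j, In j l -> 0 <= w j /\ D (F j)) by (intros; apply Hl; right; assumption).
  destruct (classic (exists j, In j l /\ 0 < w j)) as [Hpos|Hnone].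
  - destruct (Req_dec (w i) 0) as [Hz|Hnz].
    + replace (fun x => wsum (i :: l) w (fun j => F j x))
        with (fun x => wsum l w (fun j => F j x)); [apply IH; assumption|].
      apply functional_extensionality; intros x; unfold wsum; simpl; rewrite Hz; ring.
    + apply (coherent_add (fun x => w i * F i x));
        [apply coherent_scale; [lra|]|apply IH]; assumption.
  - assert (Hzero : forall j, In j l -> w j = 0).
    { intros j Hj; destruct (Hl' j Hj) as [Hwj _].
      destruct (Rle_lt_or_eq_dec _ _ Hwj) as [Hlt|Heq]; [|auto].
      exfalso; apply Hnone; exists j; auto. }
    assert (Hwi' : 0 < w i).
    { destruct Hi0 as [<-|Hi0]; [assumption|]. rewrite (Hzero i0 Hi0) in Hw0; lra. }
    replace (fun x => wsum (i :: l) w (fun j => F j x)) with (fun x => w i * F i x);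
      [apply coherent_scale; assumption|].
    apply functional_extensionality; intros x.
    unfold wsum; simpl; fold (wsum l w (fun j => F j x)).
    rewrite (wsum_ext l w (fun _ => 0) _ (fun j => F j x)), wsum_weights0; [ring|].
    intros j Hj; rewrite (Hzero j Hj); split; reflexivity.
Qed.

End CoherentCone.

Definition decb (P : Prop) : bool := if excluded_middle_informative P then true else false.

Lemma filter_decb {A : Type} (P : A -> Prop) (l : list A) y :
  In y (filter (fun x => decb (P x)) l) <-> In y l /\ P y.
Proof.
  rewrite filter_In; unfold decb.
  destruct (excluded_middle_informative (P y)); intuition discriminate.
Qed.

Definition combs_have_pos_entry (n : nat) (rows : list (nat -> R)) : Prop :=
  forall c : list (R * (nat -> R)), c <> nil ->
  (forall q, In q c -> 0 < fst q /\ In (snd q) rows) ->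
  exists j, (j < n)%nat /\ 0 < wsum c fst (fun q => snd q j).

Lemma combs_have_pos_entry_0 rows : combs_have_pos_entry 0 rows -> rows = nil.
Proof.
  destruct rows as [|r rows]; intros H; [reflexivity|].
  destruct (H ((1, r) :: nil)) as [j [Hj _]]; [discriminate| |lia].
  intros q [<-|[]]; simpl; split; [lra|left; reflexivity].
Qed.

Section FourierMotzkin.
Variables (k : nat) (rows : list (nat -> R)).

Definition combine_rows (i p : nat -> R) : nat -> R := fun j => p k * i j + - i k * p j.

Definition elim_rows : list (nat -> R) :=
  filter (fun r => decb (r k <= 0)) rows ++
  flat_map (fun i => map (combine_rows i) (filter (fun p => decb (0 < p k)) rows))
    (filter (fun i => decb (i k < 0)) rows).

Lemma in_elim_rows r : In r elim_rows <->
  (In r rows /\ r k <= 0) \/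
  exists i p, In i rows /\ i k < 0 /\ In p rows /\ 0 < p k /\ r = combine_rows i p.
Proof.
  unfold elim_rows; rewrite in_app_iff, in_flat_map, filter_decb. split.
  - intros [H|[i [Hi Hr]]]; [left; exact H|right].
    apply filter_decb in Hi. apply in_map_iff in Hr as [p [<- Hp]]. apply filter_decb in Hp.
    exists i, p; tauto.
  - intros [H|[i [p [Hi [Hik [Hp [Hpk ->]]]]]]]; [left; exact H|right].
    exists i; split; [apply filter_decb; auto|]. apply in_map, filter_decb; auto.
Qed.

Lemma expand_elim_comb (c : list (R * (nat -> R))) :
  (forall q, In q c -> 0 < fst q /\ In (snd q) elim_rows) ->
  exists c', (c <> nil -> c' <> nil) /\ (forall q, In q c' -> 0 < fst q /\ In (snd q) rows) /\
    (forall j, (j < k)%nat -> wsum c' fst (fun q => snd q j) = wsum c fst (fun q => snd q j)) /\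
    wsum c' fst (fun q => snd q k) <= 0.
Proof.
  induction c as [|[w r] c IH]; intros Hc.
  - exists nil; split; [auto|]; split; [intros _ []|]; split; [reflexivity|]; simpl; lra.
  - destruct (Hc (w, r) (or_introl eq_refl)) as [Hw Hr]; simpl in Hw, Hr.
    destruct IH as [c0 [_ [Hc0 [Hj0 Hk0]]]]; [intros; apply Hc; right; assumption|].
    apply in_elim_rows in Hr as [[Hr Hrk]|[i [p [Hi [Hik [Hp [Hpk ->]]]]]]].
    + exists ((w, r) :: c0). split; [discriminate|]. split.
      { intros q [<-|Hq]; [simpl; auto|apply Hc0; assumption]. }
      unfold wsum in *; simpl; split; [intros j Hj; rewrite Hj0; auto|nra].
    + exists ((w * p k, i) :: (w * - i k, p) :: c0). split; [discriminate|]. split.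
      { intros q [<-|[<-|Hq]]; [simpl; split; [nra|auto] .. |apply Hc0; assumption]. }
      unfold wsum, combine_rows in *; simpl.
      split; [intros j Hj; rewrite <- Hj0 by assumption; ring|nra].
Qed.

Lemma combs_elim : combs_have_pos_entry (S k) rows -> combs_have_pos_entry k elim_rows.
Proof.
  intros H c Hnil Hc. destruct (expand_elim_comb c Hc) as [c' [Hne [Hc' [Hj Hk]]]].
  destruct (H c' (Hne Hnil) Hc') as [j [Hjk Hpos]].
  destruct (Nat.eq_dec j k) as [->|Hjk']; [lra|].
  exists j; split; [lia|]. rewrite <- Hj by lia; exact Hpos.
Qed.

Variable b : nat -> R.
Hypothesis Hb : forall r, In r elim_rows -> 0 <= wsum (seq 0 k) b r.

Definition elim_bound : R :=
  MaxRlist (0 :: map (fun p => - wsum (seq 0 k) b p / p k) (filter (fun p => decb (0 < p k)) rows)).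

Lemma elim_bound_ge0 : 0 <= elim_bound.
Proof. apply MaxRlist_P1; left; reflexivity. Qed.

Lemma elim_bound_ok r : In r rows -> 0 <= wsum (seq 0 k) b r + elim_bound * r k.
Proof.
  intros Hr. destruct (Rlt_le_dec 0 (r k)) as [Hrk|Hrk].
  - assert (Hm : - wsum (seq 0 k) b r / r k <= elim_bound).
    { apply MaxRlist_P1; right.
      apply (in_map (fun p => - wsum (seq 0 k) b p / p k)), filter_decb; auto. }
    set (sr := wsum (seq 0 k) b r) in *.
    assert (r k * (- sr / r k) = - sr) by (field; lra).
    nra.
  - set (sr := wsum (seq 0 k) b r).
    assert (Hs : 0 <= sr) by (apply Hb, in_elim_rows; left; auto).
    destruct (MaxRlist_P2 (0 :: map (fun p => - wsum (seq 0 k) b p / p k)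
                                 (filter (fun p => decb (0 < p k)) rows)))
      as [Hm0|Hm]; [exists 0; left; reflexivity| |]; fold elim_bound in *.
    + rewrite <- Hm0; lra.
    + apply in_map_iff in Hm as [p [Hmp Hp]]; apply filter_decb in Hp as [Hp Hpk].
      destruct (Req_dec (r k) 0) as [Hr0|Hr0]; [rewrite Hr0; lra|].
      assert (Hc : 0 <= wsum (seq 0 k) b (combine_rows r p)).
      { apply Hb, in_elim_rows; right; exists r, p; repeat split; auto; lra. }
      unfold combine_rows in Hc; rewrite wsum_linear in Hc; fold sr in Hc.
      set (sp := wsum (seq 0 k) b p) in *. rewrite <- Hmp.
      assert (p k * (sr + - sp / p k * r k) = p k * sr + - r k * sp) by (field; lra).
      nra.
Qed.

Definition extend_weights : nat -> R := fun j => if Nat.eq_dec j k then elim_bound else b j.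

Lemma wsum_extend_weights r :
  wsum (seq 0 (S k)) extend_weights r = wsum (seq 0 k) b r + elim_bound * r k.
Proof.
  rewrite seq_S, wsum_app, (wsum_ext _ _ b _ r).
  - unfold wsum at 2, extend_weights; simpl. destruct Nat.eq_dec; [ring|congruence].
  - intros j Hj; apply in_seq in Hj. unfold extend_weights; destruct Nat.eq_dec; [lia|auto].
Qed.

End FourierMotzkin.

Theorem ville_alternative n rows : (0 < n)%nat -> combs_have_pos_entry n rows ->
  exists b, (forall j, (j < n)%nat -> 0 <= b j) /\ (exists j, (j < n)%nat /\ 0 < b j) /\
            (forall r, In r rows -> 0 <= wsum (seq 0 n) b r).
Proof.
  revert rows; induction n as [|k IH]; intros rows Hn Hc; [lia|].
  destruct (classic (exists r, In r rows /\ r k < 0)) as [[r [Hr Hrk]]|Hnone].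
  - assert (Hr2 : In r (elim_rows k rows)) by (apply in_elim_rows; left; split; [assumption|lra]).
    destruct k as [|k].
    { rewrite (combs_have_pos_entry_0 _ (combs_elim 0 rows Hc)) in Hr2; destruct Hr2. }
    destruct (IH (elim_rows (S k) rows)) as [b [Hb0 [Hbpos Hb]]];
      [lia|apply combs_elim; assumption|].
    exists (extend_weights (S k) rows b). split; [|split].
    + intros j Hj; unfold extend_weights; destruct Nat.eq_dec;
        [apply elim_bound_ge0|apply Hb0; lia].
    + destruct Hbpos as [j [Hj Hbj]]; exists j; split; [lia|].
      unfold extend_weights; destruct Nat.eq_dec; [lia|assumption].
    + intros r' Hr'. rewrite wsum_extend_weights. apply elim_bound_ok; assumption.
  - exists (fun j => if Nat.eq_dec j k then 1 else 0). split; [|split].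
    + intros j _; destruct Nat.eq_dec; lra.
    + exists k; split; [lia|]; destruct Nat.eq_dec; [lra|congruence].
    + intros r Hr. rewrite seq_S, wsum_app, (wsum_ext _ _ (fun _ => 0) _ r), wsum_weights0.
      * unfold wsum; simpl; destruct Nat.eq_dec; [|congruence].
        assert (~ r k < 0) by (intros Hrk; apply Hnone; exists r; auto). lra.
      * intros j Hj; apply in_seq in Hj; destruct Nat.eq_dec; [lia|auto].
Qed.

Lemma indic_true {X : Type} (B : X -> Prop) x : B x -> indic B x = 1.
Proof. intros H; unfold indic; destruct excluded_middle_informative; tauto. Qed.

Lemma indic_false {X : Type} (B : X -> Prop) x : ~ B x -> indic B x = 0.
Proof. intros H; unfold indic; destruct excluded_middle_informative; tauto. Qed.

Lemma indic_range {X : Type} (B : X -> Prop) x : 0 <= indic B x <= 1.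
Proof. unfold indic; destruct excluded_middle_informative; lra. Qed.

Lemma indic_iff {X : Type} (B : X -> Prop) x y : (B x <-> B y) -> indic B x = indic B y.
Proof.
  intros H; unfold indic.
  destruct (excluded_middle_informative (B x)), (excluded_middle_informative (B y)); tauto.
Qed.

Definition same_events {X : Type} (Bs : list (X -> Prop)) (x y : X) : Prop :=
  forall B, In B Bs -> (B x <-> B y).

Lemma finite_atoms {X : Type} (x0 : X) (Bs : list (X -> Prop)) :
  exists L : list X, forall x, exists y, In y L /\ same_events Bs x y.
Proof.
  induction Bs as [|B Bs [L HL]].
  - exists (x0 :: nil); intros x; exists x0; split; [left; reflexivity|intros B []].
  - set (pick y v := ClassicalEpsilon.epsilon (inhabits y)
                       (fun z => same_events Bs z y /\ (B z <-> v = true))).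
    exists (flat_map (fun y => pick y true :: pick y false :: nil) L).
    intros x; destruct (HL x) as [y [Hy Hxy]].
    assert (Hv : exists v, B x <-> v = true)
      by (destruct (classic (B x)); [exists true|exists false]; intuition discriminate).
    destruct Hv as [v Hv].
    assert (Hpick : same_events Bs (pick y v) y /\ (B (pick y v) <-> v = true))
      by (apply ClassicalEpsilon.epsilon_spec; exists x; auto).
    exists (pick y v); split.
    + apply in_flat_map; exists y; split; [assumption|]. destruct v; simpl; auto.
    + intros B' [<-|HB']; [tauto|].
      rewrite (Hxy B' HB'), (proj1 Hpick B' HB'); tauto.
Qed.

Definition gated_sum {Y Z : Type} (T : list ((Y -> R) * (Z -> Prop))) (z : Z) (y : Y) : R :=
  wsum T (fun t => indic (snd t) z) (fun t => fst t y).

Definition active {Y Z : Type} (T : list ((Y -> R) * (Z -> Prop))) (z : Z) : Prop :=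
  exists t, In t T /\ snd t z.

Section GatedSums.
Context {Y Z : Type} (T : list ((Y -> R) * (Z -> Prop))).

Lemma gated_sum_same_events z z' y :
  same_events (map snd T) z z' -> gated_sum T z y = gated_sum T z' y.
Proof.
  intros H; apply wsum_ext; intros t Ht.
  split; [apply indic_iff, H, in_map; assumption|reflexivity].
Qed.

Lemma gated_sum_inactive z y : ~ active T z -> gated_sum T z y = 0.
Proof.
  intros H; unfold gated_sum.
  rewrite (wsum_ext _ _ (fun _ => 0) _ (fun t => fst t y)), wsum_weights0; [reflexivity|].
  intros t Ht; split; [apply indic_false; intros Hz; apply H; exists t; auto|reflexivity].
Qed.

Lemma gated_sum_in (D : gset Y) z :
  coherent D -> (forall t, In t T -> D (fst t)) -> active T z -> D (gated_sum T z).
Proof.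
  intros HD HT [t [Ht Hz]]; unfold gated_sum; apply coherent_wsum; [assumption| |].
  - intros t' Ht'; split; [apply indic_range|apply HT; assumption].
  - exists t; split; [assumption|]; rewrite indic_true by assumption; lra.
Qed.

Section Representatives.
Variable L : list Z.
Hypothesis HL : forall z, exists y, In y L /\ same_events (map snd T) z y.

Lemma active_rep z : active T z -> exists y, In y (filter (fun y => decb (active T y)) L) /\
  same_events (map snd T) z y.
Proof.
  intros [t [Ht Hz]]; destruct (HL z) as [y [Hy Hzy]].
  exists y; split; [|assumption].
  apply filter_decb; split; [assumption|exists t; split; [assumption|]].
  apply (Hzy (snd t)); [apply in_map|]; assumption.
Qed.

Lemma active_reps_nil :
  (forall t, In t T -> exists z, snd t z) -> filter (fun y => decb (active T y)) L = nil -> T = nil.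
Proof.
  intros Hne Hnil; apply NNPP; intros HT.
  assert (Ht : exists t, In t T) by (destruct T as [|t T']; [congruence|exists t; left; auto]).
  destruct Ht as [t Ht]; destruct (Hne t Ht) as [z Hz].
  destruct (active_rep z) as [y [Hy _]]; [exists t; auto|].
  rewrite Hnil in Hy; destruct Hy.
Qed.

End Representatives.
End GatedSums.

Lemma exists_between {I J : Type} (P : I -> Prop) (Q : J -> Prop) (f : I -> R) (g : J -> R) :
  (exists i, P i) -> (exists j, Q j) -> (forall i j, P i -> Q j -> f i <= g j) ->
  exists w, (forall i, P i -> f i <= w) /\ (forall j, Q j -> w <= g j).
Proof.
  intros [i0 Hi0] [j0 Hj0] H.
  destruct (completeness (fun u => exists i, P i /\ u = f i)) as [w [Hub Hlub]].
  - exists (g j0); intros u [i [Hi ->]]; apply H; assumption.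
  - exists (f i0), i0; auto.
  - exists w; split.
    + intros i Hi; apply Hub; exists i; auto.
    + intros j Hj; apply Hlub; intros u [i [Hi ->]]; apply H; assumption.
Qed.

Lemma comb_over_map {A B : Type} (f : A -> B) (l : list A) (c : list (R * B)) :
  (forall q, In q c -> 0 < fst q /\ In (snd q) (map f l)) ->
  exists c', c = map (fun q => (fst q, f (snd q))) c' /\
             (forall q, In q c' -> 0 < fst q /\ In (snd q) l).
Proof.
  induction c as [|[w r] c IH]; intros Hc; [exists nil; split; [reflexivity|intros _ []]|].
  destruct (Hc (w, r) (or_introl eq_refl)) as [Hw Hr]; simpl in Hw, Hr.
  apply in_map_iff in Hr as [y [<- Hy]].
  destruct IH as [c' [-> Hc']]; [intros; apply Hc; right; assumption|].
  exists ((w, y) :: c'); split; [reflexivity|].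
  intros q [<-|Hq]; [auto|apply Hc'; assumption].
Qed.

Section Separation.
Variables (X1 X2 : Type) (D1 : gset X1) (D2 : gset X2).
Hypotheses (HD1 : coherent D1) (HD2 : coherent D2).
Variables (T12 : list ((X2 -> R) * (X1 -> Prop))) (T21 : list ((X1 -> R) * (X2 -> Prop))).
Hypothesis H12 : forall t, In t T12 -> D2 (fst t).
Hypothesis H21 : forall t, In t T21 -> D1 (fst t).
Hypothesis Hle : forall a b, gated_sum T12 a b + gated_sum T21 b a <= 0.

Local Notation same1 := (same_events (map snd T12)).
Local Notation same2 := (same_events (map snd T21)).

Lemma separating_matrix_exists : exists W : X1 -> X2 -> R, forall y y',
  (forall b, same2 b y' -> gated_sum T12 y b <= W y y') /\
  (forall a, same1 a y -> W y y' <= - gated_sum T21 y' a).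
Proof.
  pose (between y y' w := (forall b, same2 b y' -> gated_sum T12 y b <= w) /\
                          (forall a, same1 a y -> w <= - gated_sum T21 y' a)).
  apply (ClassicalEpsilon.choice (fun y Wy => forall y', between y y' (Wy y'))); intros y.
  apply (ClassicalEpsilon.choice (between y)); intros y'.
  apply exists_between; [exists y'; intros B _; tauto|exists y; intros B _; tauto|].
  intros b a Hb Ha.
  rewrite <- (gated_sum_same_events T12 a y b Ha), <- (gated_sum_same_events T21 b y' a Hb).
  specialize (Hle a b); lra.
Qed.

Variables (L1 : list X1) (L2 : list X2) (x2 : X2) (W : X1 -> X2 -> R).
Hypothesis HL1 : forall a, exists y, In y L1 /\ same1 a y.
Hypothesis HL2 : forall b, exists y, In y L2 /\ same2 b y.
Hypothesis HW : forall y y',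
  (forall b, same2 b y' -> gated_sum T12 y b <= W y y') /\
  (forall a, same1 a y -> W y y' <= - gated_sum T21 y' a).

Local Notation R1 := (filter (fun y => decb (active T12 y)) L1).
Local Notation R2 := (filter (fun y => decb (active T21 y)) L2).
Local Notation row y := (fun j => W y (nth j R2 x2)).

Lemma rows_have_pos_entry : combs_have_pos_entry (length R2) (map (fun y => row y) R1).
Proof.
  intros c Hnil Hc.
  destruct (comb_over_map _ R1 c Hc) as [c' [-> Hc']].
  set (F b := wsum c' fst (fun q => gated_sum T12 (snd q) b)).
  assert (HF : D2 F).
  { apply coherent_wsum; [assumption| |].
    - intros q Hq; destruct (Hc' q Hq) as [Hw Hy]; apply filter_decb in Hy as [_ Hy].
      split; [lra|apply gated_sum_in; assumption].
    - destruct c' as [|q c']; [contradiction|].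
      exists q; split; [left; reflexivity|apply Hc'; left; reflexivity]. }
  destruct (coherent_pos_point D2 HD2 F HF) as [b Hb].
  assert (Hact : active T21 b).
  { apply NNPP; intros Hna. assert (F b <= 0); [|lra].
    unfold F; rewrite <- (wsum_const0 c' fst); apply wsum_le; intros q Hq.
    split; [apply Rlt_le, Hc'; assumption|].
    specialize (Hle (snd q) b); rewrite (gated_sum_inactive T21 b) in Hle by assumption; lra. }
  destruct (active_rep T21 L2 HL2 b Hact) as [y' [Hy' Hby']].
  destruct (In_nth R2 y' x2 Hy') as [j [Hj Hnth]].
  exists j; split; [assumption|]. rewrite wsum_map; cbn.
  apply (Rlt_le_trans _ _ _ Hb), wsum_le; intros q Hq.
  split; [apply Rlt_le, Hc'; assumption|]. rewrite Hnth. apply (HW (snd q) y'); assumption.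
Qed.

Lemma rows_not_all_nonneg (b : nat -> R) :
  (forall j, (j < length R2)%nat -> 0 <= b j) -> (exists j, (j < length R2)%nat /\ 0 < b j) ->
  exists r, In r (map (fun y => row y) R1) /\ wsum (seq 0 (length R2)) b r < 0.
Proof.
  intros Hb0 [j0 [Hj0 Hbj0]].
  set (G a := wsum (seq 0 (length R2)) b (fun j => gated_sum T21 (nth j R2 x2) a)).
  assert (HG : D1 G).
  { apply coherent_wsum; [assumption| |exists j0; split; [apply in_seq; lia|assumption]].
    intros j Hj; apply in_seq in Hj; split; [apply Hb0; lia|].
    apply gated_sum_in; [assumption..|].
    apply (filter_decb (active T21) L2), nth_In; lia. }
  destruct (coherent_pos_point D1 HD1 G HG) as [a Ha].
  assert (Hact : active T12 a).
  { apply NNPP; intros Hna. assert (G a <= 0); [|lra].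
    unfold G; rewrite <- (wsum_const0 (seq 0 (length R2)) b); apply wsum_le; intros j Hj.
    apply in_seq in Hj; split; [apply Hb0; lia|].
    specialize (Hle a (nth j R2 x2)).
    rewrite (gated_sum_inactive T12 a) in Hle by assumption; lra. }
  destruct (active_rep T12 L1 HL1 a Hact) as [y [Hy Hay]].
  exists (row y); split; [apply (in_map (fun y => row y)); assumption|].
  apply Rle_lt_trans with (- G a); [|lra].
  unfold G; rewrite <- wsum_opp; apply wsum_le; intros j Hj.
  apply in_seq in Hj; split; [apply Hb0; lia|apply (HW y _); assumption].
Qed.

Lemma gated_sums_nil :
  (forall t, In t T12 -> exists a, snd t a) -> (forall t, In t T21 -> exists b, snd t b) ->
  T12 = nil /\ T21 = nil.
Proof.
  intros Hne12 Hne21.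
  destruct (Nat.eq_dec (length R2) 0) as [Hn|Hn].
  - pose proof rows_have_pos_entry as Hc; rewrite Hn in Hc.
    apply combs_have_pos_entry_0, map_eq_nil in Hc.
    split; [apply (active_reps_nil T12 L1); assumption|].
    apply (active_reps_nil T21 L2), length_zero_iff_nil; assumption.
  - destruct (ville_alternative (length R2) (map (fun y => row y) R1)) as [b [Hb0 [Hbpos Hb]]];
      [lia|apply rows_have_pos_entry|].
    destruct (rows_not_all_nonneg b Hb0 Hbpos) as [r [Hr Hneg]].
    specialize (Hb r Hr); lra.
Qed.

End Separation.

Theorem gated_sums_separation (X1 X2 : Type) (x1 : X1) (x2 : X2) (D1 : gset X1) (D2 : gset X2)
  (T12 : list ((X2 -> R) * (X1 -> Prop))) (T21 : list ((X1 -> R) * (X2 -> Prop))) :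
  coherent D1 -> coherent D2 ->
  (forall t, In t T12 -> D2 (fst t) /\ exists a, snd t a) ->
  (forall t, In t T21 -> D1 (fst t) /\ exists b, snd t b) ->
  (forall a b, gated_sum T12 a b + gated_sum T21 b a <= 0) ->
  T12 = nil /\ T21 = nil.
Proof.
  intros HD1 HD2 H12 H21 Hle.
  destruct (finite_atoms x1 (map snd T12)) as [L1 HL1].
  destruct (finite_atoms x2 (map snd T21)) as [L2 HL2].
  destruct (separating_matrix_exists X1 X2 T12 T21 Hle) as [W HW].
  apply (gated_sums_nil X1 X2 D1 D2 HD1 HD2 T12 T21 (fun t Ht => proj1 (H12 t Ht))
           (fun t Ht => proj1 (H21 t Ht)) Hle L1 L2 x2 W HL1 HL2 HW);
    intros t Ht; [apply H12|apply H21]; assumption.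
Qed.

Section PositiveHull.
Context {X : Type}.
Implicit Type A : gset X.

Lemma posi_bounded A f : (forall g, A g -> Defs.bounded g) -> posi A f -> Defs.bounded f.
Proof.
  intros HA [l [_ [Hl Heq]]]; rewrite Forall_forall in Hl.
  destruct (wsum_bounded l fst snd) as [M HM]; [intros q Hq; apply HA, Hl; assumption|].
  exists M; intros x; rewrite Heq; apply HM.
Qed.

Lemma posi_of_mem A f : A f -> posi A f.
Proof.
  intros Hf; exists ((1, f) :: nil); split; [discriminate|split].
  - constructor; [split; simpl; [lra|assumption]|constructor].
  - intros x; simpl; ring.
Qed.

Lemma posi_scale A f a : 0 < a -> posi A f -> posi A (fun x => a * f x).
Proof.
  intros Ha [l [Hnil [Hl Heq]]].
  exists (map (fun q => (a * fst q, snd q)) l).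
  split; [destruct l; [contradiction|discriminate]|split].
  - rewrite Forall_map; eapply Forall_impl; [|exact Hl].
    simpl; intros q [Hq HAq]; split; [nra|assumption].
  - intros x; rewrite Heq.
    change (a * wsum l fst (fun q => snd q x) =
            wsum (map (fun q => (a * fst q, snd q)) l) fst (fun q => snd q x)).
    rewrite wsum_map; cbn; rewrite wsum_scalel; reflexivity.
Qed.

Lemma posi_add A f g : posi A f -> posi A g -> posi A (fun x => f x + g x).
Proof.
  intros [l1 [Hnil1 [Hl1 Heq1]]] [l2 [_ [Hl2 Heq2]]].
  exists (l1 ++ l2); split; [destruct l1; [contradiction|discriminate]|split].
  - apply Forall_app; split; assumption.
  - intros x; rewrite Heq1, Heq2.
    change (wsum l1 fst (fun q => snd q x) + wsum l2 fst (fun q => snd q x) =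
            wsum (l1 ++ l2) fst (fun q => snd q x)).
    rewrite wsum_app; reflexivity.
Qed.

Lemma natext_coherent A :
  (forall g, A g -> Defs.bounded g) ->
  (forall f, natext A f -> (forall x, f x <= 0) -> False) ->
  coherent (natext A).
Proof.
  intros HA Hnonpos.
  split; [|split; [|split; [|split]]].
  - intros f; apply posi_bounded; intros g [Hg|[Hg _]]; auto.
  - intros f Hb Hnn Hnz; apply posi_of_mem; right; split; auto.
  - intros f a _ Ha; apply posi_scale; assumption.
  - intros f g _ _; apply posi_add.
  - intros f _ Hf HAf; exact (Hnonpos f HAf Hf).
Qed.

End PositiveHull.

Lemma bounded_mul_indic {Y Z W : Type} (f : Y -> R) (B : Z -> Prop) (p : W -> Y) (q : W -> Z) :
  Defs.bounded f -> Defs.bounded (fun w => f (p w) * indic B (q w)).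
Proof.
  intros [M HM]; exists M; intros w.
  pose proof (indic_range B (q w)); pose proof (HM (p w)); pose proof (Rabs_pos (f (p w))).
  rewrite Rabs_mult, (Rabs_pos_eq (indic B (q w))) by lra. nra.
Qed.

Section IndependentProduct.
Variables (X1 X2 : Type) (x1 : X1) (x2 : X2).
Variables (BB1 : (X1 -> Prop) -> Prop) (BB2 : (X2 -> Prop) -> Prop).
Hypotheses (HB1 : forall B, BB1 B -> exists x, B x) (HB2 : forall B, BB2 B -> exists x, B x).
Variables (D1 : gset X1) (D2 : gset X2).
Hypotheses (HD1 : coherent D1) (HD2 : coherent D2).

Local Notation gens := (fun g => A12 BB1 D2 g \/ A21 BB2 D1 g).

Lemma indep_prod_gens_bounded g : gens g -> Defs.bounded g.
Proof.
  intros [[f2 [B1 [Hf [_ ->]]]]|[f1 [B2 [Hf [_ ->]]]]]; apply bounded_mul_indic;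
    [apply (coherent_bounded D2)|apply (coherent_bounded D1)]; assumption.
Qed.

Lemma indep_prod_decompose (l : list (R * (X1 * X2 -> R))) :
  (forall q, In q l -> 0 < fst q /\ (gens (snd q) \/ Gpos (snd q))) ->
  exists T12 T21 (h : X1 * X2 -> R),
    (forall t, In t T12 -> D2 (fst t) /\ exists a, snd t a) /\
    (forall t, In t T21 -> D1 (fst t) /\ exists b, snd t b) /\
    (forall z, 0 <= h z) /\
    (forall z, wsum l fst (fun q => snd q z) =
               gated_sum T12 (fst z) (snd z) + gated_sum T21 (snd z) (fst z) + h z) /\
    (T12 = nil -> T21 = nil -> l <> nil -> exists z, 0 < h z).
Proof.
  induction l as [|[w g] l IH]; intros Hl.
  - exists nil, nil, (fun _ => 0).
    split; [intros t []|split; [intros t []|split; [intros; lra|split]]].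
    + intros z; unfold gated_sum, wsum; simpl; ring.
    + intros _ _ []; reflexivity.
  - destruct (Hl (w, g) (or_introl eq_refl)) as [Hw Hg]; simpl in Hw, Hg.
    destruct IH as (T12 & T21 & h & H12 & H21 & Hh & Hsum & Hpos);
      [intros; apply Hl; right; assumption|].
    destruct Hg as [[[f2 [B1 [Hf [HB ->]]]]|[f1 [B2 [Hf [HB ->]]]]]|[_ [Hnn [z0 Hz0]]]].
    + exists ((fun b => w * f2 b, B1) :: T12), T21, h.
      split; [|split; [assumption|split; [assumption|split]]].
      * intros t [<-|Ht]; [|apply H12; assumption]. split; [apply coherent_scale; assumption|].
        destruct HB as [HB| ->]; [apply HB1; assumption|exists x1; exact I].
      * intros z; unfold wsum, gated_sum in *; simpl; rewrite Hsum; ring.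
      * discriminate.
    + exists T12, ((fun a => w * f1 a, B2) :: T21), h.
      split; [assumption|split; [|split; [assumption|split]]].
      * intros t [<-|Ht]; [|apply H21; assumption]. split; [apply coherent_scale; assumption|].
        destruct HB as [HB| ->]; [apply HB2; assumption|exists x2; exact I].
      * intros z; unfold wsum, gated_sum in *; simpl; rewrite Hsum; ring.
      * intros _; discriminate.
    + exists T12, T21, (fun z => w * g z + h z).
      split; [assumption|split; [assumption|split; [|split]]].
      * intros z; specialize (Hh z); specialize (Hnn z); nra.
      * intros z; unfold wsum in *; simpl; rewrite Hsum; ring.
      * intros _ _ _; exists z0; specialize (Hh z0); specialize (Hnn z0).
        assert (0 < g z0) by (destruct (Rle_lt_or_eq_dec _ _ Hnn); [assumption|congruence]). nra.
Qed.

Lemma indep_prod_not_nonpos f :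
  indep_prod BB1 BB2 D1 D2 f -> (forall z, f z <= 0) -> False.
Proof.
  intros [l [Hnil [Hl Heq]]] Hf; rewrite Forall_forall in Hl.
  destruct (indep_prod_decompose l Hl) as (T12 & T21 & h & H12 & H21 & Hh & Hsum & Hpos).
  assert (Hsplit : forall z,
             gated_sum T12 (fst z) (snd z) + gated_sum T21 (snd z) (fst z) + h z <= 0)
    by (intros z; rewrite <- Hsum; specialize (Hf z); rewrite Heq in Hf; exact Hf).
  destruct (gated_sums_separation X1 X2 x1 x2 D1 D2 T12 T21) as [-> ->]; try assumption.
  - intros a b; specialize (Hsplit (a, b)); specialize (Hh (a, b)); simpl in Hsplit; lra.
  - destruct (Hpos eq_refl eq_refl Hnil) as [z Hz]; specialize (Hsplit z).
    unfold gated_sum, wsum in Hsplit; simpl in Hsplit; lra.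
Qed.

End IndependentProduct.

Theorem proposition39 (X1 X2 : Type) (x1 : X1) (x2 : X2)
  (BB1 : (X1 -> Prop) -> Prop) (BB2 : (X2 -> Prop) -> Prop)
  (HB1 : forall B, BB1 B -> exists x, B x)
  (HB2 : forall B, BB2 B -> exists x, B x)
  (D1 : gset X1) (D2 : gset X2)
  (HD1 : coherent D1) (HD2 : coherent D2) :
  coherent (indep_prod BB1 BB2 D1 D2).
Proof.
  apply natext_coherent.
  - apply indep_prod_gens_bounded; assumption.
  - apply (indep_prod_not_nonpos X1 X2 x1 x2 BB1 BB2 HB1 HB2 D1 D2 HD1 HD2).
Qed.
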